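(* Let $g \ge h \ge 2$ be integers. There is a constant $C>0$ depending only on $g$ and $h$ such that for every positive integer $n$ and every $C_h[g]$ set $A \subset \{1,2,\dots,n\}$, $$|A| \le (g-1)^{1/h}\, n^{1-\frac{1}{h}} + C\, n^{\frac{1}{2}-\frac{1}{2h}}.$$
   Context: A set of integers $A$ is called a $C_h[g]$ set if for every set $X$ of $h$ integers there do not exist $g$ distinct integers $k_1,\dots,k_g$ such that $X+k_i \subset A$ for all $i=1,\dots,g$ (here $X+k=\{x+k : x\in X\}$). In words, $A$ contains no $g$ distinct translates of a common $h$-element set. *)

From Stdlib Require Import Reals ZArith List.
Import ListNotations.

Definition Chg_set (h g : nat) (A : Z -> Prop) : Prop :=
  ~ exists (X ks : list Z),
      NoDup X /\ length X = h /\ NoDup ks /\ length ks = g /\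
      forall k x, In k ks -> In x X -> A (x + k)%Z.

(* Slide a window of length m over {1, ..., n} and let a_t be the number of
   elements of A in the t-th of the n + m + 1 windows meeting it.  Every element
   lies in m windows, so the a_t add up to m |A|.  By the C_h[g] property a given
   h-subset of window positions is filled in fewer than g windows, so double
   counting gives sum_t C(a_t, h) <= (g - 1) C(m, h), whence
   sum_t (a_t - h)^h <= (g - 1) m^h.  The power-mean inequality then yields
   m |A| <= h (n + m + 1) + (g - 1)^(1/h) m (n + m + 1)^(1 - 1/h), and
   m ~ n^((1 + 1/h) / 2) balances the two error terms. *)

From Stdlib Require Import Reals ZArith List Lra Lia.
From mathcomp Require all_boot zify ssrZ.

Module WindowCounting.

Import all_boot zify ssrZ.
Local Set Implicit Arguments.
Local Unset Strict Implicit.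

Lemma sum_binomial_card_le (I T : finType) (W : I -> {set T}) (h g : nat) :
  (forall Y : {set T}, #|Y| = h -> #|[set i | Y \subset W i]| < g) ->
  \sum_i 'C(#|W i|, h) <= (g - 1) * 'C(#|T|, h).
Proof.
move=> few_covers.
have draws i : 'C(#|W i|, h) = \sum_(Y : {set T} | #|Y| == h) (Y \subset W i).
  rewrite -cards_draws -sum1dep_card [LHS]big_mkcond [RHS]big_mkcond /=.
  by apply: eq_bigr => Y _; case: (_ \subset _); case: (_ == _).
rewrite (eq_bigr _ (fun i _ => draws i)) exchange_big /=.
rewrite -card_draws mulnC -sum_nat_cond_const; apply: leq_sum => Y /eqP /few_covers.
rewrite -sum1dep_card big_mkcond /= => covers.
by rewrite subn1 -ltnS (ltn_predK covers).
Qed.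

Lemma expn_subn_le_bin_fact (a k : nat) : (a - k) ^ k <= 'C(a, k) * k`!.
Proof.
rewrite bin_ffact ffact_prod -[X in _ ^ X](card_ord k) -prod_nat_const.
by apply: leq_prod => i _; rewrite leq_sub2l // ltnW.
Qed.

Lemma bin_fact_le_expn (a k : nat) : 'C(a, k) * k`! <= a ^ k.
Proof.
rewrite bin_ffact ffact_prod -[X in _ ^ X](card_ord k) -prod_nat_const.
by apply: leq_prod => i _; apply: leq_subr.
Qed.

(* [(a^k - b^k) (a - b) >= 0], rearranged so that no subtraction occurs. *)
Lemma cross_powers_le (a b k : nat) : a ^ k * b + b ^ k * a <= a ^ k.+1 + b ^ k.+1.
Proof.
wlog le_ab : a b / a <= b.
  move=> wl; case: (leqP a b) => [/wl // | /ltnW /wl].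
  by rewrite addnC [_ ^ k.+1 + _]addnC.
have le_pow : a ^ k <= b ^ k by case: k => // k; rewrite leq_exp2r.
have := leq_mul le_pow (leqnn (b - a)); rewrite !expnSr; nia.
Qed.

(* Chebyshev's sum inequality for the similarly ordered families [x i ^ k] and [x i]. *)
Lemma sum_expn_mul_sum_le (I : finType) (x : I -> nat) (k : nat) :
  (\sum_i x i ^ k) * (\sum_i x i) <= #|I| * \sum_i x i ^ k.+1.
Proof.
rewrite -(leq_pmul2l (isT : 0 < 2)).
have -> : 2 * ((\sum_i x i ^ k) * \sum_i x i) =
          \sum_i \sum_j (x i ^ k * x j + x j ^ k * x i).
  rewrite mul2n -addnn big_distrl /=.
  under [RHS]eq_bigr do rewrite big_split /=.
  rewrite big_split /=; congr (_ + _).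
    by apply: eq_bigr => i _; rewrite big_distrr.
  by rewrite exchange_big /=; apply: eq_bigr => i _; rewrite big_distrr.
have -> : 2 * (#|I| * \sum_i x i ^ k.+1) = \sum_i \sum_j (x i ^ k.+1 + x j ^ k.+1).
  under [RHS]eq_bigr do rewrite big_split sum_nat_const /=.
  by rewrite big_split -big_distrr sum_nat_const /= mul2n -addnn.
by apply: leq_sum => i _; apply: leq_sum => j _; apply: cross_powers_le.
Qed.

Lemma expn_sum_le (I : finType) (x : I -> nat) (k : nat) :
  (\sum_i x i) ^ k.+1 <= #|I| ^ k * \sum_i x i ^ k.+1.
Proof.
elim: k => [|k IH]; first by rewrite mul1n; under [X in _ <= X]eq_bigr do rewrite expn1.
rewrite expnSr (leq_trans (leq_mul IH (leqnn _))) // -mulnA expnSr -mulnA leq_mul2l.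
by rewrite sum_expn_mul_sum_le orbT.
Qed.

Lemma card_windows_ge (m T : nat) (s : seq nat) :
  uniq s -> {in s, forall a, m <= a <= T} ->
  m * size s <= \sum_(t < T.+1) #|[set y : 'I_m | t + y \in s]|.
Proof.
move=> uniq_s s_range.
under eq_bigr do rewrite -sum1dep_card big_mkcond /=.
rewrite exchange_big /= (@leq_trans (\sum_(y < m) size s)) //.
  by rewrite sum_nat_const card_ord.
apply: leq_sum => y _; rewrite -big_mkcond sum1dep_card cardE /=.
pose shift a : 'I_T.+1 := inord (a - y).
have y_lt_m := ltn_ord y.
rewrite -(size_map shift); apply: uniq_leq_size.
  rewrite map_inj_in_uniq // => a b /s_range a_range /s_range b_range /(congr1 val).
  by rewrite /= !inordK; lia.
move=> _ /mapP [a /[dup] /s_range a_range s_a ->]; rewrite mem_enum inE inordK ?subnK //; lia.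
Qed.

Lemma windows_sum_bound (m T h g : nat) (s : seq nat) :
  0 < h -> uniq s -> {in s, forall a, m <= a <= T} ->
  (forall Y : {set 'I_m}, #|Y| = h ->
     #|[set t : 'I_T.+1 | Y \subset [set y : 'I_m | t + y \in s]]| < g) ->
  exists2 x, m * size s <= x + h * T.+1 & x ^ h <= (g - 1) * m ^ h * T.+1 ^ h.-1.
Proof.
move=> h_gt0 uniq_s s_range few_covers.
pose W (t : 'I_T.+1) := [set y : 'I_m | t + y \in s].
exists (\sum_t (#|W t| - h)).
  apply: leq_trans (card_windows_ge uniq_s s_range) _.
  rewrite (@leq_trans (\sum_t (#|W t| - h + h))) //.
    by apply: leq_sum => t _; rewrite addnC -leq_subLR.
  by rewrite big_split sum_nat_const card_ord mulnC.
have sum_pow_le : \sum_t (#|W t| - h) ^ h <= (g - 1) * m ^ h.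
  apply: (@leq_trans (\sum_t 'C(#|W t|, h) * h`!)).
    by apply: leq_sum => t _; apply: expn_subn_le_bin_fact.
  rewrite -big_distrl /= (leq_trans (leq_mul (sum_binomial_card_le few_covers) (leqnn _))) //.
  by rewrite card_ord -mulnA leq_mul2l bin_fact_le_expn orbT.
case: h h_gt0 few_covers sum_pow_le => // k _ _ sum_pow_le.
apply: leq_trans (expn_sum_le _ k) _.
by rewrite card_ord mulnC leq_mul2r sum_pow_le orbT.
Qed.

Lemma In_mem (T : eqType) (x : T) (s : seq T) : reflect (In x s) (x \in s).
Proof.
elim: s => [|y s IH]; first by constructor.
rewrite in_cons; apply: (iffP orP) => [[/eqP ->|/IH]|[->|/IH]]; by [left | right].
Qed.

Lemma NoDupP (T : eqType) (s : seq T) : reflect (NoDup s) (uniq s).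
Proof.
elim: s => [|x s IH]; first by do 2 constructor.
apply: (iffP andP) => [[x_s /IH nd_s]|/NoDup_cons_iff [x_s /IH]].
  by constructor=> // /In_mem; apply/negP.
by split=> //; apply/negP => /In_mem.
Qed.

Lemma length_size (T : Type) (s : seq T) : length s = size s.
Proof. by elim: s => //= x s ->. Qed.

(* After shifting A up by m, the windows [t, t + m), t <= n + m, cover every
   element exactly m times. *)
Lemma Chg_windows_bound (n m h g : nat) (A : seq Z) :
  0 < h -> NoDup A -> (forall a, In a A -> (1 <= a <= Z.of_nat n)%Z) ->
  Chg_set h g (fun z => In z A) ->
  exists2 x, m * size A <= x + h * (n + m).+1 &
             x ^ h <= (g - 1) * m ^ h * (n + m).+1 ^ h.-1.
Proof.
move=> h_gt0 /NoDupP uniq_A A_range ChgA.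
have {}A_range a : a \in A -> (1 <= a <= Z.of_nat n)%Z by move/In_mem/A_range.
pose shift a := (Z.to_nat a + m)%N.
rewrite -(size_map shift); apply: windows_sum_bound => //.
- rewrite map_inj_in_uniq // => a b /A_range ? /A_range ?; rewrite /shift; lia.
- by move=> _ /mapP [a /A_range ? ->]; rewrite /shift; lia.
move=> Y card_Y; rewrite ltnNge; apply/negP => many_covers; apply: ChgA.
set covers := [set t | _] in many_covers.
exists [seq Z.of_nat (nat_of_ord y) | y <- enum Y].
exists [seq (Z.of_nat (nat_of_ord t) - Z.of_nat m)%Z | t <- take g (enum covers)].
rewrite !length_size !size_map size_takel -?cardE //; split; [|split=> //; split; [|split=> //]].
- apply/NoDupP; rewrite map_inj_uniq ?enum_uniq // => y1 y2 /Nat2Z.inj; exact: ord_inj.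
- apply/NoDupP; rewrite map_inj_uniq ?take_uniq ?enum_uniq //.
  by move=> t1 t2 /Z.sub_cancel_r /Nat2Z.inj; apply: ord_inj.
move=> _ _ /In_mem/mapP [t /mem_take t_covers ->] /In_mem/mapP [y y_Y ->].
move: t_covers; rewrite mem_enum inE => /subsetP /(_ y); rewrite mem_enum in y_Y.
rewrite inE => /(_ y_Y) /mapP [a /[dup] a_A /A_range a_range shift_a].
apply/In_mem; congr (_ \in A): a_A; rewrite /shift in shift_a; lia.
Qed.

End WindowCounting.

Open Scope R_scope.

Lemma INR_expn (a k : nat) : INR (ssrnat.expn a k) = INR a ^ k.
Proof.
  induction k as [|k IH]; [reflexivity|].
  rewrite ssrnat.expnS, mult_INR, IH; reflexivity.
Qed.

Lemma Chg_windows_bound_R (n m h g : nat) (A : list Z) :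
  (0 < h)%nat -> (1 <= g)%nat -> NoDup A ->
  (forall a, In a A -> (1 <= a <= Z.of_nat n)%Z) -> Chg_set h g (fun z => In z A) ->
  exists x, 0 <= x /\
    INR m * INR (length A) <= x + INR h * (INR n + INR m + 1) /\
    x ^ h <= (INR g - 1) * INR m ^ h * (INR n + INR m + 1) ^ (h - 1).
Proof.
  intros Hh Hg HA Hr Hchg.
  destruct (WindowCounting.Chg_windows_bound m (ssrbool.introT ssrnat.ltP Hh) HA Hr Hchg)
    as [x Hlin Hpow].
  apply (ssrbool.elimT ssrnat.leP), le_INR in Hlin, Hpow.
  rewrite <- ssrnat.plusE, <- ssrnat.multE in Hlin, Hpow.
  rewrite <- ssrnat.minusE in Hpow.
  exists (INR x); split; [apply pos_INR|split].
  - rewrite WindowCounting.length_size.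
    rewrite mult_INR, plus_INR, mult_INR, S_INR, plus_INR in Hlin; exact Hlin.
  - rewrite INR_expn, !mult_INR, !INR_expn, S_INR, plus_INR, minus_INR in Hpow by exact Hg.
    rewrite Nat.sub_1_r; exact Hpow.
Qed.

Lemma Rpower_pos (x y : R) : 0 < Rpower x y.
Proof. apply exp_pos. Qed.

Lemma Rpower_pow_l (k : nat) (x y : R) : 0 < x -> Rpower (x ^ k) y = Rpower x (INR k * y).
Proof. intros Hx; rewrite <- Rpower_pow, Rpower_mult by exact Hx; reflexivity. Qed.

Lemma le_Rpower_root_of_pow_le (k : nat) (x y : R) :
  (0 < k)%nat -> 0 <= x -> x ^ k <= y -> x <= Rpower y (1 / INR k).
Proof.
  intros Hk Hx Hxy.
  destruct (Req_dec x 0) as [Hx0|Hx0]; [rewrite Hx0; apply Rlt_le, Rpower_pos|].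
  assert (Hx' : 0 < x) by lra.
  assert (HkR : 0 < INR k) by (apply lt_0_INR; exact Hk).
  replace x with (Rpower (x ^ k) (1 / INR k)) at 1.
  - apply Rle_Rpower_l; [apply Rlt_le, Rdiv_lt_0_compat; lra|].
    split; [apply pow_lt; exact Hx'|exact Hxy].
  - rewrite Rpower_pow_l by exact Hx'.
    replace (INR k * (1 / INR k)) with 1 by (field; lra).
    apply Rpower_1; exact Hx'.
Qed.

Lemma le_of_window_bounds (h : nat) (B M T x L : R) :
  (0 < h)%nat -> 0 < B -> 0 < M -> 0 < T -> 0 <= x ->
  M * L <= x + INR h * T -> x ^ h <= B * M ^ h * T ^ (h - 1) ->
  L <= Rpower B (1 / INR h) * Rpower T (1 - 1 / INR h) + INR h * T / M.
Proof.
  intros Hh HB HM HT Hx Hlin Hpow.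
  assert (HhR : 0 < INR h) by (apply lt_0_INR; exact Hh).
  assert (Hroot : Rpower (B * M ^ h * T ^ (h - 1)) (1 / INR h)
                  = M * (Rpower B (1 / INR h) * Rpower T (1 - 1 / INR h))).
  { rewrite <- !Rpower_mult_distr by
      (repeat apply Rmult_lt_0_compat; try apply pow_lt; assumption).
    rewrite !Rpower_pow_l, minus_INR by (assumption || lia).
    replace (INR h * (1 / INR h)) with 1 by (field; lra).
    replace ((INR h - INR 1) * (1 / INR h)) with (1 - 1 / INR h) by (simpl; field; lra).
    rewrite Rpower_1 by exact HM; ring. }
  apply le_Rpower_root_of_pow_le in Hpow; [|exact Hh|exact Hx].
  rewrite Hroot in Hpow.
  apply Rmult_le_reg_l with M; [exact HM|].
  replace (M * (Rpower B (1 / INR h) * Rpower T (1 - 1 / INR h) + INR h * T / M))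
    with (M * (Rpower B (1 / INR h) * Rpower T (1 - 1 / INR h)) + INR h * T) by (field; lra).
  lra.
Qed.

Lemma exists_INR_between (p : R) : 0 <= p -> exists m : nat, p < INR m <= p + 1.
Proof.
  intros Hp; destruct (archimed p) as [Hup1 Hup2].
  exists (Z.to_nat (up p)).
  rewrite INR_IZR_INZ, Z2Nat.id; [lra|].
  apply le_IZR; simpl; lra.
Qed.

Lemma window_choice_bound (N M G H e : R) :
  1 <= N -> 0 < e <= 1 / 2 -> 0 <= G -> 0 <= H ->
  Rpower N ((1 + e) / 2) < M <= Rpower N ((1 + e) / 2) + 1 ->
  G * Rpower (N + M + 1) (1 - e) + H * (N + M + 1) / M
  <= G * Rpower N (1 - e) + (3 * G + 3 * H) * Rpower N (1 / 2 - e / 2).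
Proof.
  intros HN He HG HH HM.
  set (p := Rpower N ((1 + e) / 2)) in *.
  set (q := Rpower N (- e)).
  set (r := Rpower N (1 / 2 - e / 2)).
  set (T := N + M + 1).
  assert (Hp : 1 <= p).
  { rewrite <- (Rpower_O N) by lra; apply Rle_Rpower; lra. }
  assert (Hr : 1 <= r).
  { rewrite <- (Rpower_O N) by lra; apply Rle_Rpower; lra. }
  assert (Hq : 0 < q) by apply Rpower_pos.
  assert (Hpq : p * q = r).
  { unfold p, q, r; rewrite <- Rpower_plus; f_equal; field. }
  assert (Hpr : p * r = N).
  { unfold p, r; rewrite <- Rpower_plus.
    replace ((1 + e) / 2 + (1 / 2 - e / 2)) with 1 by field; apply Rpower_1; lra. }
  assert (HNq : N * q = Rpower N (1 - e)).
  { unfold q; rewrite <- (Rpower_1 N) at 1 by lra; rewrite <- Rpower_plus; f_equal; ring. }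
  assert (HTq : Rpower T (1 - e) <= T * q).
  { unfold Rminus; rewrite Rpower_plus, Rpower_1 by (unfold T; lra).
    apply Rmult_le_compat_l; [unfold T; lra|].
    unfold q; rewrite !Rpower_Ropp.
    apply Rinv_le_contravar; [apply Rpower_pos|].
    apply Rle_Rpower_l; [|split]; unfold T; lra. }
  assert (HTM : T / M <= 3 * r).
  { apply Rmult_le_reg_l with M; [lra|].
    replace (M * (T / M)) with T by (field; lra).
    unfold T; nra. }
  assert (HH' : H * T / M <= H * (3 * r)).
  { unfold Rdiv; rewrite Rmult_assoc; apply Rmult_le_compat_l; assumption. }
  assert (HG' : G * Rpower T (1 - e) <= G * (Rpower N (1 - e) + 3 * r)).
  { apply Rmult_le_compat_l; [assumption|].
    apply Rle_trans with (T * q); [assumption|].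
    rewrite <- HNq, <- Hpq; unfold T; nra. }
  lra.
Qed.

Theorem theorem1 (g h : nat) (Hh : (2 <= h)%nat) (Hgh : (h <= g)%nat) :
  exists C : R, C > 0 /\
    forall (n : nat) (A : list Z),
      (1 <= n)%nat ->
      NoDup A ->
      (forall a, In a A -> (1 <= a <= Z.of_nat n)%Z) ->
      Chg_set h g (fun z => In z A) ->
      INR (length A) <=
        Rpower (INR g - 1) (1 / INR h) * Rpower (INR n) (1 - 1 / INR h)
        + C * Rpower (INR n) (1 / 2 - 1 / (2 * INR h)).
Proof.
  assert (HhR : 2 <= INR h) by (apply (le_INR 2) in Hh; simpl in Hh; lra).
  assert (HgR : 2 <= INR g) by (apply (le_INR 2); lia).
  set (e := 1 / INR h).
  assert (He : 0 < e <= 1 / 2).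
  { unfold e; split; [apply Rdiv_lt_0_compat; lra|].
    apply Rmult_le_compat_l; [lra|apply Rinv_le_contravar; lra]. }
  set (G := Rpower (INR g - 1) e).
  assert (HG : 0 < G) by apply Rpower_pos.
  exists (3 * G + 3 * INR h); split; [lra|].
  intros n A Hn HA Hr Hchg.
  assert (HN : 1 <= INR n) by (apply (le_INR 1); exact Hn).
  pose proof (Rpower_pos (INR n) ((1 + e) / 2)) as Hp.
  destruct (exists_INR_between (Rpower (INR n) ((1 + e) / 2))) as [m Hm]; [lra|].
  destruct (Chg_windows_bound_R n m h g A ltac:(lia) ltac:(lia) HA Hr Hchg)
    as (x & Hx & Hlin & Hpow).
  replace (1 / (2 * INR h)) with (e / 2) by (unfold e; field; lra).
  eapply Rle_trans.
  - apply (le_of_window_bounds h (INR g - 1) (INR m) (INR n + INR m + 1) x); lia || lra.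
  - apply (window_choice_bound (INR n) (INR m) G (INR h) e); lra.
Qed.
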